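(* Let $\mathbf v=(v_1,\dots,v_m)$ and $\mathbf k=(k_1,\dots,k_m)$ be $m$-tuples of positive integers with $\mathbf v\ge\mathbf k$, where $m\ge2$. Then \[ C(\mathbf v,\mathbf k,2)\ \ge\ \max_{\substack{1\le i,j\le m\\ i\neq j}}\left\lceil\frac{v_i}{k_i}\left\lceil\frac{v_j}{k_j}\right\rceil\right\rceil. \]
   Context: Let $X_1,\dots,X_m$ be pairwise disjoint sets with $|X_i|=v_i$. A block is an $m$-tuple $(B_1,\dots,B_m)$ with $B_i\subseteq X_i$, $|B_i|=k_i$. An $m$-tuple of sets $(T_1,\dots,T_m)$ is $(\mathbf v,\mathbf k,2)$-admissible if $T_i\subseteq X_i$, $|T_i|\le k_i$ and $\sum|T_i|=2$; it is contained in a block if $T_i\subseteq B_i$ for all $i$. A ${\rm GC}(\mathbf v,\mathbf k,2)$ is a finite family (repetitions allowed) of blocks containing every admissible tuple in at least one block; $C(\mathbf v,\mathbf k,2)$ is the minimum number of blocks. *)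

From HB Require Import structures.
From mathcomp Require Import all_boot all_order all_algebra.
Set Implicit Arguments. Unset Strict Implicit. Unset Printing Implicit Defensive.
Import Order.TTheory GRing.Theory Num.Theory.

(* Ground set: disjoint union of X_1..X_m, with X_i = 'I_(v i).
   A point is a dependent pair (i, x) with x : 'I_(v i). *)
Definition point (m : nat) (v : 'I_m -> nat) := {i : 'I_m & 'I_(v i)}.

(* A block (B_1,...,B_m), B_i ⊆ X_i, |B_i| = k_i, represented as the subset
   B = ⊔ B_i of the disjoint union. *)
Definition is_block (m : nat) (v k : 'I_m -> nat) (B : {set point v}) : Prop :=
  forall i : 'I_m, #|[set x in B | tag x == i]| = k i.

(* (v,k,2)-admissible tuple (T_1..T_m): sum |T_i| = 2, |T_i| <= k_i.  It is
   determined by its union T = {x, y} with x <> y, the only constraint being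
   that if x,y lie in the same X_i then 2 <= k_i. *)
Definition admissible_pair (m : nat) (v k : 'I_m -> nat) (x y : point v) : Prop :=
  x <> y /\ (tag x = tag y -> 2 <= k (tag x))%N.

Definition is_GC (m : nat) (v k : 'I_m -> nat) (F : seq {set point v}) : Prop :=
  (forall B, B \in F -> is_block k B) /\
  (forall x y : point v, admissible_pair k x y ->
     exists2 B, B \in F & (x \in B) && (y \in B)).

(* Fix i <> j and a point x of X_i.  Each of the r(x) blocks through x meets
   X_j in k_j points, and together they cover X_j, since x and any y of X_j
   form an admissible pair; hence v_j <= r(x) k_j, i.e. r(x) >= ceil(v_j/k_j).
   Counting the incidences between X_i and the blocks gives
   sum_x r(x) = |F| k_i, so v_i ceil(v_j/k_j) <= |F| k_i. *)

From HB Require Import structures.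
From mathcomp Require Import all_boot all_order all_algebra.
Import Order.TTheory GRing.Theory Num.Theory.
Set Implicit Arguments.
Unset Strict Implicit.
Unset Printing Implicit Defensive.

Local Open Scope ring_scope.

Lemma card_bigcup_seq_le (I T : finType) (r : seq I) (P : pred I)
    (F : I -> {set T}) :
  (#|\bigcup_(i <- r | P i) F i| <= \sum_(i <- r | P i) #|F i|)%N.
Proof.
apply: (big_ind2 (fun (A : {set T}) n => #|A| <= n)%N) => //.
  by rewrite cards0.
move=> A m B n leAm leBn.
by apply: leq_trans (leq_card_setU A B) (leq_add leAm leBn).
Qed.

Lemma card_le_count_mul (I T : finType) (r : seq I) (P : pred I)
    (F : I -> {set T}) (S : {set T}) (K : nat) :
  (forall i, i \in r -> #|F i| = K) ->
  S \subset \bigcup_(i <- r | P i) F i ->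
  (#|S| <= count P r * K)%N.
Proof.
move=> cardF /subset_leq_card /leq_trans; apply.
apply: leq_trans (card_bigcup_seq_le r P F) _.
rewrite -sum1_count big_distrl /= big_seq_cond [X in (_ <= X)%N]big_seq_cond.
by apply: leq_sum => i /andP[ri _]; rewrite cardF // mul1n.
Qed.

Lemma ceil_div_le (R : archiRealFieldType) (a : R) (b : nat) (n : int) :
  (0 < b)%N -> a <= n%:~R * b%:R -> Num.ceil (a / b%:R) <= n.
Proof. by move=> b_gt0; rewrite ceil_le_int ler_pdivrMr ?ltr0n. Qed.

Section Incidence.

Variables (m : nat) (v k : 'I_m -> nat).

Definition tag_point (i : 'I_m) (x : 'I_(v i)) : point v :=
  Tagged (fun i => 'I_(v i)) x.

Definition fibre (B : {set point v}) (i : 'I_m) : {set 'I_(v i)} :=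
  [set x | tag_point x \in B].

Lemma card_fibre (B : {set point v}) (i : 'I_m) :
  #|fibre B i| = #|[set z in B | tag z == i]|.
Proof.
rewrite -(card_imset _ (@eq_from_Tagged _ (fun i => 'I_(v i)) i)).
apply: eq_card => -[i' y]; rewrite inE /=.
apply/imsetP/andP => [[x x_fib eq_yx] | [yB /eqP i'i]].
  rewrite inE /tag_point -eq_yx in x_fib; rewrite x_fib.
  by have /= -> := congr1 tag eq_yx.
by subst i'; exists y; rewrite ?inE.
Qed.

Lemma card_fibre_block (B : {set point v}) (i : 'I_m) :
  is_block k B -> #|fibre B i| = k i.
Proof. by rewrite card_fibre => ->. Qed.

Definition replication (F : seq {set point v}) (i : 'I_m) (x : 'I_(v i)) :=
  count (fun B : {set point v} => tag_point x \in B) F.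

Lemma sum_replication (F : seq {set point v}) (i : 'I_m) :
  (forall B, B \in F -> is_block k B) ->
  (\sum_(x < v i) replication F x = size F * k i)%N.
Proof.
move=> blocksF; rewrite /replication.
under eq_bigr do rewrite -sum1_count big_mkcond.
rewrite exchange_big /= -sum1_size big_distrl /= !big_seq.
apply: eq_bigr => B FB; rewrite mul1n -(card_fibre_block i (blocksF B FB)).
by rewrite -sum1_card [RHS]big_mkcond; apply: eq_bigr => x _; rewrite inE.
Qed.

Lemma replication_lower_bound (F : seq {set point v}) (i j : 'I_m)
    (x : 'I_(v i)) :
  is_GC k F -> i != j -> (v j <= replication F x * k j)%N.
Proof.
move=> [blocksF coverF] neq_ij.
rewrite -[v j]card_ord -cardsT.
apply: card_le_count_mul (fun B FB => card_fibre_block j (blocksF B FB)) _.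
apply/subsetP => y _.
have [|B FB /andP[xB yB]] := coverF (tag_point x) (tag_point y).
  by split=> [/(congr1 tag) | ] /= eq_ij; rewrite eq_ij eqxx in neq_ij.
rewrite -big_filter bigcup_seq; apply/bigcupP.
by exists B; rewrite ?mem_filter ?inE ?xB.
Qed.

End Incidence.

Theorem corollary5p3 (m : nat) (v k : 'I_m -> nat)
  (hm : (2 <= m)%N)
  (hk : forall i, (0 < k i)%N)
  (hv : forall i, (0 < v i)%N)
  (hvk : forall i, (k i <= v i)%N)
  (F : seq {set point v}) (hF : is_GC k F) :
  forall i j : 'I_m, i != j ->
    Num.ceil ((v i)%:R / (k i)%:R * (Num.ceil ((v j)%:R / (k j)%:R : rat))%:~R : rat)
      <= (size F)%:Z.
Proof.
move=> i j neq_ij.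
set c := Num.ceil ((v j)%:R / _).
have c_le_r (x : 'I_(v i)) : c <= (replication F x)%:Z.
  apply: ceil_div_le => //; rewrite -natrM ler_nat.
  exact: replication_lower_bound.
have vc_le : (v i)%:R * c <= (size F * k i)%:R :> int.
  rewrite -(sum_replication _ hF.1) natr_sum mulr_natl.
  rewrite -[X in c *+ X]card_ord -sumr_const.
  by apply: ler_sum => x _; rewrite natz c_le_r.
rewrite mulrAC; apply: ceil_div_le => //.
by move: vc_le; rewrite -(ler_int rat) rmorphM /= !rmorph_nat natrM.
Qed.
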